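(* Let $\mathcal{C}\subset\mathbb{R}^n$ be closed and Clarke regular, $G:\mathcal{C}\to\mathbb{S}^n_+$ a metric, and $f:\mathbb{R}^n\to\mathbb{R}^n$ a vector field such that $x\mapsto\|f(x)\|_{G(x)}$ is bounded on $\mathcal{C}$. Let $\gamma\ge\sup_{x\in\mathcal{C}}\|f(x)\|_{G(x)}$. Then $x:[0,T]\to\mathcal{C}$ with $T>0$ is a solution of $\dot x=\Pi^G_\mathcal{C}[f](x)$, $x\in\mathcal{C}$, if and only if it is a solution of $$\dot x\in F(x):=f(x)-N^G_x\mathcal{C}\cap\gamma\mathbb{B},\qquad x\in\mathcal{C}.$$
   Context: $\mathbb{B}$ is the closed unit ball; $\mathbb{S}^n_+$ the symmetric positive definite matrices; $\langle u,v\rangle_{G(x)}:=u^TG(x)v$, $\|u\|_{G(x)}:=\langle u,u\rangle_{G(x)}^{1/2}$. Tangent cone: $v\in T_x\mathcal{C}$ iff there are $x_k\to x$ in $\mathcal{C}$ and $\delta_k\to0^+$ with $(x_k-x)/\delta_k\to v$; $\mathcal{C}$ is Clarke regular if $x\mapsto T_x\mathcal{C}$ is inner semicontinuous (then $T_x\mathcal{C}$ is closed convex). $N^G_x\mathcal{C}:=\{\eta:\langle\eta,v\rangle_{G(x)}\le0\ \forall v\in T_x\mathcal{C}\}$. $\Pi^G_\mathcal{C}[f](x):=\arg\min_{v\in T_x\mathcal{C}}\|v-f(x)\|_{G(x)}$ for $x\in\mathcal{C}$. Solutions are Carathéodory: absolutely continuous $x$ with $x(t)\in\mathcal{C}$ and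 the differential equation/inclusion holding for almost all $t\in[0,T]$. *)

From mathcomp Require Import all_boot all_order all_algebra.
From mathcomp Require Import all_classical all_reals all_analysis.
Import Order.TTheory GRing.Theory Num.Theory numFieldNormedType.Exports.
Set Implicit Arguments. Unset Strict Implicit. Unset Printing Implicit Defensive.
Local Open Scope classical_set_scope.
Local Open Scope ring_scope.

Section Defs.
Variables (R : realType) (n : nat).
Local Notation vec := 'cV[R]_n.

Definition gminner (G : 'M[R]_n) (u v : vec) : R := (u^T *m G *m v) 0 0.
Definition gmnorm (G : 'M[R]_n) (u : vec) : R := Num.sqrt (gminner G u u).

Definition spd (G : 'M[R]_n) : Prop :=
  G^T = G /\ forall u : vec, u != 0 -> 0 < gminner G u u.

Definition metric_on (C : set vec) (G : vec -> 'M[R]_n) : Prop :=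
  forall x, C x -> spd (G x).

Definition tangent_cone (C : set vec) (x : vec) : set vec :=
  fun v => exists (xk : nat -> vec) (dk : nat -> R),
    (forall k, C (xk k)) /\ (forall k, 0 < dk k) /\
    xk @ \oo --> x /\ dk @ \oo --> (0 : R) /\
    (fun k => (dk k)^-1 *: (xk k - x)) @ \oo --> v.

(* Inner semicontinuity of x |-> T_x C on C (sequential form):
   for every x in C, v in T_x C and every sequence y_k -> x in C there are
   v_k in T_{y_k} C with v_k -> v. *)
Definition clarke_regular (C : set vec) : Prop :=
  forall x, C x -> forall v, tangent_cone C x v ->
  forall yk : nat -> vec, (forall k, C (yk k)) -> yk @ \oo --> x ->
  exists vk : nat -> vec, (forall k, tangent_cone C (yk k) (vk k)) /\
    vk @ \oo --> v.

Definition gnormal_cone (C : set vec) (G : vec -> 'M[R]_n) (x : vec) : set vec :=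
  fun eta => forall v, tangent_cone C x v -> gminner (G x) eta v <= 0.

Definition gproj (C : set vec) (G : vec -> 'M[R]_n) (f : vec -> vec) (x : vec)
  : set vec :=
  fun v => tangent_cone C x v /\
    forall w, tangent_cone C x w ->
      gmnorm (G x) (v - f x) <= gmnorm (G x) (w - f x).

Definition pds_inclusion (C : set vec) (G : vec -> 'M[R]_n) (f : vec -> vec)
  (gamma : R) (x : vec) : set vec :=
  fun w => exists eta, gnormal_cone C G x eta /\ gmnorm (G x) eta <= gamma /\
    w = f x - eta.

Definition abs_cont_on (a b : R) (x : R -> vec) : Prop :=
  forall eps : R, 0 < eps -> exists2 delta : R, 0 < delta &
    forall (m : nat) (s t : 'I_m -> R),
      (forall i, a <= s i /\ s i <= t i /\ t i <= b) ->
      (forall i j, i != j -> t i <= s j \/ t j <= s i) ->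
      \sum_(i < m) (t i - s i) < delta ->
      \sum_(i < m) `|x (t i) - x (s i)| < eps.

Definition caratheodory_solution (C : set vec) (Phi : vec -> set vec)
  (T : R) (x : R -> vec) : Prop :=
  abs_cont_on 0 T x /\
  (forall t, 0 <= t <= T -> C (x t)) /\
  {ae (@lebesgue_measure R), forall t, 0 <= t <= T ->
     derivable x t 1 /\ Phi (x t) ('D_1 x t)}.

End Defs.

From mathcomp Require Import all_boot all_order all_algebra.
From mathcomp Require Import all_classical all_reals all_analysis.
From mathcomp Require Import ring lra.
Import Order.TTheory GRing.Theory Num.Theory numFieldNormedType.Exports.
Local Open Scope classical_set_scope.
Local Open Scope ring_scope.
Set Implicit Arguments. Unset Strict Implicit. Unset Printing Implicit Defensive.

(* A closed Clarke regular set has convex tangent cones: to move from x in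
   direction a + b, first follow a, then follow b from the nearby points of C,
   whose tangent cones contain directions close to b by inner semicontinuity;
   a supremum argument shows this keeps y + h b within o(h) of C uniformly for y
   near x.  Along a solution, at every interior time of differentiability both
   xdot and -xdot are tangent, so xdot lies in the lineality space of the convex
   cone T = T_x C.  For such v, v minimises ||w - f||_G over T iff eta = f - v is
   G-normal to T, and then <eta, v>_G = 0 gives ||eta||_G <= ||f||_G <= gamma;
   conversely f - eta is such a minimiser for every normal eta. *)

Section gminner.
Variables (R : realType) (n : nat) (G : 'M[R]_n).
Implicit Types (u v w : 'cV[R]_n).

Lemma gminnerDl u v w : gminner G (u + v) w = gminner G u w + gminner G v w.
Proof. by rewrite /gminner linearD !mulmxDl mxE. Qed.

Lemma gminnerDr u v w : gminner G w (u + v) = gminner G w u + gminner G w v.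
Proof. by rewrite /gminner !mulmxDr mxE. Qed.

Lemma gminnerZl a u w : gminner G (a *: u) w = a * gminner G u w.
Proof. by rewrite /gminner linearZ /= -!scalemxAl mxE. Qed.

Lemma gminnerZr a u w : gminner G w (a *: u) = a * gminner G w u.
Proof. by rewrite /gminner -!scalemxAr mxE. Qed.

Lemma gminnerNl u w : gminner G (- u) w = - gminner G u w.
Proof. by rewrite -scaleN1r gminnerZl mulN1r. Qed.

Lemma gminnerNr u w : gminner G w (- u) = - gminner G w u.
Proof. by rewrite -scaleN1r gminnerZr mulN1r. Qed.

Definition gminnerE := (gminnerDl, gminnerDr, gminnerNl, gminnerNr, gminnerZl, gminnerZr).

Lemma gminnerC u w : G^T = G -> gminner G u w = gminner G w u.
Proof.
move=> GT; rewrite /gminner.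
have -> : (u^T *m G *m w) 0 0 = (u^T *m G *m w)^T 0 0 by rewrite [RHS]mxE.
by rewrite !trmx_mul trmxK GT mulmxA.
Qed.

Hypothesis spdG : spd G.

Lemma gminner_ge0 u : 0 <= gminner G u u.
Proof.
have [->|/(proj2 spdG)/ltW//] := eqVneq u 0.
by rewrite /gminner mulmx0 mxE.
Qed.

Lemma ler_gmnorm u w : (gmnorm G u <= gmnorm G w) = (gminner G u u <= gminner G w w).
Proof. by rewrite ler_sqrt ?gminner_ge0. Qed.

Lemma gminner_ge0_of_min e w :
  (forall s, 0 < s -> gminner G e e <= gminner G (e + s *: w) (e + s *: w)) ->
  0 <= gminner G e w.
Proof.
move=> emin; rewrite leNgt; apply/negP => ew_lt0.
pose c := - gminner G e w; pose q := gminner G w w.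
have q_ge0 : 0 <= q by exact: gminner_ge0.
have c_gt0 : 0 < c by rewrite oppr_gt0.
(* the quadratic [s |-> 2 s <e,w> + s^2 q] is negative at [s = c / (q + 1)] *)
have s_gt0 : 0 < c / (q + 1) by rewrite divr_gt0 // ltr_wpDl.
have sq : c / (q + 1) * (q + 1) = c by rewrite mulfVK // gt_eqF // ltr_wpDl.
have := emin _ s_gt0.
rewrite !gminnerE (gminnerC w e (proj1 spdG)) -/q.
have -> : gminner G e w = - c by rewrite opprK.
nra.
Qed.

End gminner.

Section nearest_point.
Variable R : realType.

Lemma mx_normT m n (A : 'M[R]_(m, n)) : `|A^T| = `|A|.
Proof.
rewrite [LHS]/Num.norm [RHS]/Num.norm /= !mx_normrE.
rewrite (reindex (fun ij : 'I_m * 'I_n => (ij.2, ij.1))) /=.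
  by apply: eq_bigr => ij _; rewrite mxE.
by exists (fun ij : 'I_n * 'I_m => (ij.2, ij.1)) => -[].
Qed.

Lemma continuous_trmx m n : continuous (@trmx R m n).
Proof.
move=> A B /= /(nbhs_ballP A^T) [e e_gt0 eB].
apply/nbhs_ballP; exists e => //= A' [_ AA'].
by apply: eB; split => // i j; rewrite !mxE.
Qed.

Lemma closed_nearest n (C : set 'cV[R]_n) p c : closed C -> C c ->
  exists2 z, C z & forall w, C w -> `|p - z| <= `|p - w|.
Proof.
move=> Ccl Cc; pose r := `|p - c|.
(* Heine-Borel is only available for row vectors, hence the transpositions. *)
pose dist_p (u : 'rV[R]_n) := `|p - u^T|.
have dist_p_cont : continuous dist_p.
  move=> u; have pu_cont : {for u, continuous (fun u : 'rV[R]_n => p - u^T)}.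
    exact: cvgB (cvg_cst p) (@continuous_trmx 1 n u).
  exact: continuous_comp pu_cont (@norm_continuous _ _ _).
pose K := (@trmx R 1 n @^-1` C) `&` (dist_p @^-1` [set y | y <= r]).
have K_compact : compact K.
  apply: bounded_closed_compact.
    exists (`|p| + r); split; first exact: num_real.
    move=> M pr_M u [_ pu] /=; rewrite -mx_normT.
    apply: le_trans (ltW pr_M); rewrite -[u^T](subKr p).
    by apply: le_trans (ler_normB _ _) _; exact: lerD.
  apply: closedI; apply: preimage_closed.
  - by move=> u _; exact: continuous_trmx.
  - exact: Ccl.
  - by move=> u _; exact: dist_p_cont.
  - exact: closed_le.
have K0 : K !=set0 by exists c^T; rewrite /K /dist_p /= trmxK.
have [u Ku umin] :=
  compact_EVT_min K0 K_compact (continuous_subspaceT dist_p_cont).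
have u_nearest w : C w -> `|p - w| <= r -> `|p - u^T| <= `|p - w|.
  move=> Cw wr; have := umin w^T; rewrite /dist_p trmxK; apply; apply/mem_set.
  by split; rewrite /= /dist_p trmxK.
exists u^T => [|w Cw]; first by case: (set_mem Ku).
have [/(u_nearest w Cw)//|/ltW rw] := leP `|p - w| r.
exact: le_trans (u_nearest c Cc (lexx _)) rw.
Qed.

Lemma closed_dist_le n (C : set 'cV[R]_n) p r : closed C ->
  (forall e, 0 < e -> exists2 z, C z & `|p - z| <= r + e) ->
  exists2 z, C z & `|p - z| <= r.
Proof.
move=> Ccl approx; have [c Cc _] := approx 1 ltr01.
have [z Cz zmin] := closed_nearest p Ccl Cc.
exists z => //; apply/ler_addgt0Pr => e e_gt0.
by have [w Cw pw] := approx e e_gt0; exact: le_trans (zmin w Cw) pw.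
Qed.

End nearest_point.

Section tangent_cone.
Variables (R : realType) (n : nat) (C : set 'cV[R]_n).
Local Notation TC := (tangent_cone C).
Implicit Types (x y z u v a b : 'cV[R]_n).

Lemma tangent_cone_seq x v (z : nat -> 'cV[R]_n) (d : nat -> R) :
  (forall k, C (z k)) -> (forall k, 0 < d k) -> d @ \oo --> 0 ->
  (fun k => (d k)^-1 *: (z k - x)) @ \oo --> v -> TC x v.
Proof.
move=> Cz d_gt0 d0 zv; exists z, d; split => //; split => //; split; last by split.
have -> : z = (fun k => x + d k *: ((d k)^-1 *: (z k - x))).
  by apply/funext => k; rewrite scalerA divff ?gt_eqF // scale1r addrC subrK.
have : (fun k => x + d k *: ((d k)^-1 *: (z k - x))) @ \oo --> x + 0 *: v.
  by apply: cvgD; [exact: cvg_cst | exact: cvgZ].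
by rewrite scale0r addr0.
Qed.

Lemma tangent_coneZ x s v : 0 < s -> TC x v -> TC x (s *: v).
Proof.
move=> s_gt0 [z [d [Cz [d_gt0 [_ [d0 zv]]]]]].
apply: (tangent_cone_seq (d := fun k => d k / s)) Cz _ _ _.
- by move=> k; rewrite divr_gt0.
- by rewrite -(mul0r s^-1); exact: cvgM (cvg_cst _).
have -> : (fun k => (d k / s)^-1 *: (z k - x)) = s \*: (fun k => (d k)^-1 *: (z k - x)).
  by apply/funext => k /=; rewrite invfM invrK scalerA mulrC.
exact: cvgZ (cvg_cst _) _.
Qed.

Lemma tangent_cone_step z u e H : TC z u -> 0 < e -> 0 < H ->
  exists d, [/\ 0 < d, d < H & exists2 z', C z' & `|z + d *: u - z'| <= e * d].
Proof.
move=> [zk [dk [Czk [dk_gt0 [_ [dk0 zku]]]]]] e_gt0 H_gt0.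
near \oo => k.
exists (dk k); split => //.
  have : `|0 - dk k| < H by near: k; exact: (cvgrPdist_lt _ _).1 dk0 _ H_gt0.
  by rewrite sub0r normrN gtr0_norm.
exists (zk k) => //.
have -> : z + dk k *: u - zk k = dk k *: (u - (dk k)^-1 *: (zk k - z)).
  rewrite scalerBr scalerA divff ?gt_eqF // scale1r.
  by apply/matrixP => i j; rewrite !mxE; ring.
rewrite normrZ gtr0_norm // [e * _]mulrC ler_pM2l //; apply: ltW.
by near: k; exact: (cvgrPdist_lt _ _).1 zku _ e_gt0.
Unshelve. all: by end_near.
Qed.

Lemma clarke_regular_nbhs x b e : clarke_regular C -> C x -> TC x b -> 0 < e ->
  exists2 d, 0 < d & forall y, C y -> `|y - x| < d -> exists2 u, TC y u & `|u - b| < e.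
Proof.
move=> creg Cx Tb e_gt0; apply: contrapT => no_d.
have /choice [y yP] : forall k : nat, exists y, [/\ C y, `|y - x| < k.+1%:R^-1 &
    forall u, TC y u -> e <= `|u - b|].
  move=> k; apply: contrapT => no_y; apply: no_d; exists k.+1%:R^-1 => // y Cy yx.
  apply: contrapT => no_u; apply: no_y; exists y; split => // u Tu.
  by rewrite leNgt; apply/negP => ub; apply: no_u; exists u.
have yx : y @ \oo --> x.
  apply/cvgrPdist_lt => eps eps_gt0.
  near=> k; rewrite distrC; have [_ yk _] := yP k; apply: lt_trans yk _.
  have : `|harmonic k : R| < eps.
    by near: k; exact: (cvgr0Pnorm_lt _).1 (@cvg_harmonic R) eps eps_gt0.
  by rewrite /harmonic /= ger0_norm.
have [u [Tu ub]] := creg x Cx b Tb y (fun k => let: And3 Cy _ _ := yP k in Cy) yx.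
have [k /= uk] := filter_ex ((cvgrPdist_lt _ _).1 ub e e_gt0).
have [_ _ /(_ _ (Tu k))] := yP k.
by rewrite distrC leNgt uk.
Unshelve. all: by end_near.
Qed.

Definition ray_near y b e t := exists2 z, C z & `|y + t *: b - z| <= e * t.

Lemma ray_near_sup y b e s : closed C -> 0 <= e ->
  (forall zeta, 0 < zeta -> exists t, [/\ s - zeta < t, t <= s & ray_near y b e t]) ->
  ray_near y b e s.
Proof.
move=> Ccl e_ge0 approx; apply: closed_dist_le => // zeta zeta_gt0.
have b1_gt0 : 0 < `|b| + 1 by rewrite ltr_wpDl.
have [t [st ts [z Cz tz]]] := approx _ (divr_gt0 zeta_gt0 b1_gt0).
exists z => //.
have -> : y + s *: b - z = (s - t) *: b + (y + t *: b - z).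
  by apply/matrixP => i j; rewrite !mxE; ring.
apply: le_trans (ler_normD _ _) _; rewrite normrZ ger0_norm ?subr_ge0 //.
have : (s - t) * `|b| <= zeta.
  apply: le_trans (_ : zeta / (`|b| + 1) * (`|b| + 1) <= _); last by rewrite mulfVK ?gt_eqF.
  by apply: ler_pM; rewrite ?subr_ge0 ?lerDl //; lra.
have : e * t <= e * s by rewrite ler_wpM2l.
lra.
Qed.

Lemma clarke_regular_uniform_tangent x b e : closed C -> clarke_regular C ->
  C x -> TC x b -> 0 < e ->
  exists2 d, 0 < d & forall y h, C y -> `|y - x| < d -> 0 < h -> h * (`|b| + e) < d ->
  ray_near y b e h.
Proof.
move=> Ccl creg Cx Tb e_gt0; have e2_gt0 : 0 < e / 2 by rewrite divr_gt0.
have [del del_gt0 b_near] := clarke_regular_nbhs creg Cx Tb e2_gt0.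
exists (del / 2) => [|y h Cy yx h_gt0 hd]; first by rewrite divr_gt0.
pose A := [set t | 0 <= t <= h /\ ray_near y b e t].
have A0 : A 0.
  split; first by rewrite lexx ltW.
  by exists y; rewrite // scale0r addr0 subrr normr0 mulr0.
have A_sup : has_sup A by split; [exists 0 | exists h => t [/andP[]]].
pose s := sup A; have s_ge0 : 0 <= s by exact: sup_upper_bound.
have [z0 Cz0 z0s] : ray_near y b e s.
  apply: ray_near_sup => [//||zeta /sup_adherent /(_ A_sup) [t At st]]; first exact: ltW.
  by exists t; split; [by [] | exact: sup_upper_bound | case: At].
have [h_le_s|s_lt_h] := leP h s.
  have s_le_h : s <= h by apply: ge_sup => [|t [/andP[]]]; first by exists 0.
  by exists z0; rewrite // (@le_anti _ _ h s) ?h_le_s.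
(* otherwise a tangent direction at [z0] close to [b] extends [A] beyond [s] *)
have nb := normr_ge0 b.
have z0x : `|z0 - x| < del.
  have -> : z0 - x = - (y + s *: b - z0) + (y - x) + s *: b.
    by apply/matrixP => i j; rewrite !mxE; ring.
  apply: le_lt_trans (ler_normD _ _) _; apply: le_lt_trans (lerD (ler_normD _ _) (lexx _)) _.
  rewrite normrN normrZ ger0_norm //.
  have : s * `|b| <= h * `|b| by rewrite ler_wpM2r // ltW.
  have : e * s <= e * h by rewrite ler_pM2l // ltW.
  lra.
have [u Tu ub] := b_near z0 Cz0 z0x.
have hs_gt0 : 0 < h - s by rewrite subr_gt0.
have [d [d_gt0 dhs [z Cz zd]]] := tangent_cone_step Tu e2_gt0 hs_gt0.
have : A (s + d).
  split; first by apply/andP; split; lra.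
  exists z => //.
  have -> : y + (s + d) *: b - z = (y + s *: b - z0) + d *: (b - u) + (z0 + d *: u - z).
    by rewrite scalerDl scalerBr; apply/matrixP => i j; rewrite !mxE; ring.
  apply: le_trans (ler_normD _ _) _; apply: le_trans (lerD (ler_normD _ _) (lexx _)) _.
  rewrite normrZ gtr0_norm // (distrC b u).
  have : d * `|u - b| <= d * (e / 2) by rewrite ler_pM2l // ltW.
  lra.
by move/(sup_upper_bound A_sup); rewrite -/s; lra.
Qed.

Lemma tangent_coneD x a b : closed C -> clarke_regular C -> C x ->
  TC x a -> TC x b -> TC x (a + b).
Proof.
move=> Ccl creg Cx [xk [dk [Cxk [dk_gt0 [xkx [dk0 xka]]]]]] Tb.
pose p k := xk k + dk k *: b.
have /choice [z /all_and2 [Cz zmin]] : forall k, exists z, C z /\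
    forall w, C w -> `|p k - z| <= `|p k - w|.
  by move=> k; have [z] := closed_nearest (p k) Ccl Cx; exists z.
apply: (tangent_cone_seq Cz dk_gt0 dk0).
have -> : (fun k => (dk k)^-1 *: (z k - x)) =
    (fun k => (dk k)^-1 *: (xk k - x) + b - (dk k)^-1 *: (p k - z k)).
  apply/funext => k; have dk_neq0 : dk k != 0 by rewrite gt_eqF.
  by apply/matrixP => i j; rewrite !mxE; field.
rewrite -[a + b]subr0; apply: cvgB; first by apply: cvgD => //; exact: cvg_cst.
apply/cvgr0Pnorm_lt => eps eps_gt0; have eps2_gt0 : 0 < eps / 2 by rewrite divr_gt0.
have [d d_gt0 unif] := clarke_regular_uniform_tangent Ccl creg Cx Tb eps2_gt0.
have bd_gt0 : 0 < d / (`|b| + eps / 2) by rewrite divr_gt0 // ltr_wpDl.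
near=> k.
have [w Cw pw] : ray_near (xk k) b (eps / 2) (dk k).
  apply: unif => //.
    by rewrite distrC; near: k; exact: (cvgrPdist_lt _ _).1 xkx _ d_gt0.
  rewrite -ltr_pdivlMr ?ltr_wpDl //.
  have : `|0 - dk k| < d / (`|b| + eps / 2).
    by near: k; exact: (cvgrPdist_lt _ _).1 dk0 _ bd_gt0.
  by rewrite sub0r normrN gtr0_norm.
rewrite normrZ gtr0_norm ?invr_gt0 // ltr_pdivrMl //.
apply: le_lt_trans (le_trans (zmin k w Cw) (pw : `|p k - w| <= _)) _.
by have := dk_gt0 k; nra.
Unshelve. all: by end_near.
Qed.

Lemma derive_tangent_cone_seq (x : R -> 'cV[R]_n) t (h : nat -> R) sg :
  derivable x t 1 -> (forall k, C (x (t + h k))) -> (forall k, 0 < sg * h k) ->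
  h @ \oo --> 0 -> TC (x t) (sg^-1 *: 'D_1 x t).
Proof.
move=> dx Cx sgh h0.
have h_neq0 k : h k != 0 by apply/eqP => hk0; have := sgh k; rewrite hk0 mulr0 ltxx.
pose q r := r^-1 *: ((x \o shift t) (r *: 1) - x t).
have qD : q r @[r --> 0^'] --> 'D_1 x t := dx.
have h0' : h @ \oo --> 0^'.
  move=> P P0; apply: (@filterS _ \oo _ (h @^-1` [set r | r != 0 -> P r]) (h @^-1` P) _ (h0 _ P0)).
  by move=> k /= Ph; exact: Ph (h_neq0 k).
apply: (tangent_cone_seq Cx sgh).
  by rewrite -(mulr0 sg); exact: cvgM (cvg_cst _) h0.
have -> : (fun k => (sg * h k)^-1 *: (x (t + h k) - x t)) = (fun k => sg^-1 *: q (h k)).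
  apply/funext => k; rewrite invfM -scalerA /q /= /shift.
  have -> : (h k)%:A = h k :> R by exact: mulr1.
  by rewrite [h k + t]addrC.
exact: cvgZ (cvg_cst _) (cvg_comp _ _ h0' qD).
Qed.

Lemma derive_tangent_cone (x : R -> 'cV[R]_n) t T :
  (forall s, 0 <= s <= T -> C (x s)) -> 0 < t < T -> derivable x t 1 ->
  TC (x t) ('D_1 x t) /\ TC (x t) (- 'D_1 x t).
Proof.
move=> Cx /andP[t_gt0 tT] dx.
have harm_gt0 k : 0 < harmonic k :> R by rewrite /harmonic /= invr_gt0.
have harm_le1 k : harmonic k <= 1 :> R by rewrite /harmonic /= invf_le1 // ler1n.
have scaled_harmonic (c : R) : (fun k => c * harmonic k) @ \oo --> 0.
  by rewrite -(mulr0 c); exact: cvgM (cvg_cst _) (@cvg_harmonic R).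
split.
  rewrite -[X in TC _ X]scale1r -[X in X *: _]invr1.
  apply: (derive_tangent_cone_seq (h := fun k => (T - t) * harmonic k)) => // [k|k].
    apply: Cx; have := harm_gt0 k; have := harm_le1 k; nra.
  by rewrite mul1r mulr_gt0 // subr_gt0.
rewrite -scaleN1r -[X in X *: _]invrN1.
apply: (derive_tangent_cone_seq (h := fun k => - (t * harmonic k))) => // [k|k|].
- apply: Cx; have := harm_gt0 k; have := harm_le1 k; nra.
- by rewrite mulN1r opprK mulr_gt0.
- by rewrite -oppr0; exact: cvgN.
Qed.

End tangent_cone.

Section cone_projection.
Variables (R : realType) (n : nat) (G : 'M[R]_n) (K : set 'cV[R]_n) (f v : 'cV[R]_n).
Hypothesis spdG : spd G.
Let gminnerCG u w := gminnerC u w (proj1 spdG).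

Lemma argmin_polar : (forall s w, 0 < s -> K w -> K (v + s *: w)) ->
  (forall w, K w -> gmnorm G (v - f) <= gmnorm G (w - f)) ->
  forall w, K w -> gminner G (f - v) w <= 0.
Proof.
move=> Kshift vmin w Kw; rewrite -opprB gminnerNl oppr_le0.
apply: gminner_ge0_of_min => // s s_gt0.
have := vmin _ (Kshift _ _ s_gt0 Kw); rewrite ler_gmnorm //.
by rewrite addrAC.
Qed.

Lemma polar_argmin : K (- v) -> (forall w, K w -> gminner G (f - v) w <= 0) ->
  forall w, K w -> gmnorm G (v - f) <= gmnorm G (w - f).
Proof.
move=> Knv polar w Kw; rewrite ler_gmnorm //.
have := polar _ Kw; have := polar _ Knv; have := gminner_ge0 spdG (w - v).
rewrite !gminnerE !(gminnerCG v) !(gminnerCG w) (gminnerCG f v).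
lra.
Qed.

Lemma polar_gmnorm_le : K v -> K (- v) -> (forall w, K w -> gminner G (f - v) w <= 0) ->
  gmnorm G (f - v) <= gmnorm G f.
Proof.
move=> Kv Knv polar; rewrite ler_gmnorm //.
have := polar _ Kv; have := polar _ Knv; have := gminner_ge0 spdG v.
rewrite !gminnerE !(gminnerCG v).
lra.
Qed.

End cone_projection.

Lemma gproj_pds_inclusionE (R : realType) n (C : set 'cV[R]_n) G f gamma x v :
  spd (G x) ->
  (forall a b, tangent_cone C x a -> tangent_cone C x b -> tangent_cone C x (a + b)) ->
  tangent_cone C x v -> tangent_cone C x (- v) -> gmnorm (G x) (f x) <= gamma ->
  gproj C G f x v <-> pds_inclusion C G f gamma x v.
Proof.
move=> spdG TD Tv Tnv f_le; split.
- case=> _ vmin.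
  have Tshift s w : 0 < s -> tangent_cone C x w -> tangent_cone C x (v + s *: w).
    by move=> s_gt0 Tw; exact/TD/tangent_coneZ.
  have polar := argmin_polar spdG Tshift vmin.
  exists (f x - v); split => //; split; last by rewrite subKr.
  exact: le_trans (polar_gmnorm_le spdG Tv Tnv polar) f_le.
- case=> eta [eta_normal [_ veta]]; subst v; split => //.
  by apply: polar_argmin spdG Tnv _ => w Tw; rewrite subKr; exact: eta_normal.
Qed.

Lemma ae_lebesgue_neq2 (R : realType) (a b : R) :
  {ae @lebesgue_measure R, forall t, t != a /\ t != b}.
Proof.
have null1 (c : R) : (@lebesgue_measure R).-negligible [set c].
  by apply/negligibleP => //; exact: lebesgue_measure_set1.
apply: negligibleS (negligibleU (null1 a) (null1 b)).
by move=> t /= /not_andP[] /negP/negPn/eqP ->; [left | right].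
Qed.

Lemma caratheodory_solution_equiv (R : realType) n (C : set 'cV[R]_n)
    (Phi Psi : 'cV[R]_n -> set 'cV[R]_n) T (x : R -> 'cV[R]_n) :
  (forall t, 0 < t < T -> derivable x t 1 -> (forall s, 0 <= s <= T -> C (x s)) ->
    Phi (x t) ('D_1 x t) <-> Psi (x t) ('D_1 x t)) ->
  caratheodory_solution C Phi T x <-> caratheodory_solution C Psi T x.
Proof.
move=> PhiPsi; have ends := ae_lebesgue_neq2 0 T.
have interior t : 0 <= t <= T -> t != 0 /\ t != T -> 0 < t < T.
  by case/andP=> t0 tT [t_neq0 t_neqT]; rewrite !lt_neqAle t0 tT eq_sym t_neq0 t_neqT.
have aeF := ae_filter_ringOfSetsType (@lebesgue_measure R).
split=> -[ac [xC sol]]; do 2!split => //;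
  apply: (filterS2 aeF _ ends sol) => t t_ends sol_t tb; have [dx Dx] := sol_t tb;
  split => //; apply/(PhiPsi t (interior t tb t_ends) dx xC) => //.
Qed.

Theorem proposition2p11 (R : realType) (n : nat) (C : set 'cV[R]_n)
  (G : 'cV[R]_n -> 'M[R]_n) (f : 'cV[R]_n -> 'cV[R]_n) (gamma T : R) :
  closed C -> clarke_regular C -> metric_on C G ->
  (exists M : R, forall x, C x -> gmnorm (G x) (f x) <= M) ->
  (forall x, C x -> gmnorm (G x) (f x) <= gamma) ->
  0 < T ->
  forall x : R -> 'cV[R]_n,
    caratheodory_solution C (gproj C G f) T x <->
    caratheodory_solution C (pds_inclusion C G f gamma) T x.
Proof.
move=> Ccl creg G_metric _ f_le _ x.
apply: caratheodory_solution_equiv => t t_in dx xC.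
have Cxt : C (x t) by apply: xC; case/andP: t_in => /ltW -> /ltW ->.
have [Tdx Tndx] := derive_tangent_cone xC t_in dx.
apply: gproj_pds_inclusionE; [exact: G_metric | | by [] | by [] | exact: f_le].
by move=> a b; exact: tangent_coneD.
Qed.
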